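(* Let $G$ be a non-complete double-critical $k$-chromatic graph. Then $G$ does not contain the complete graph $K_{k-1}$ as a subgraph.
   Context: All graphs are finite and simple. A graph $G$ is (vertex-)critical if $\chi(G-v)<\chi(G)$ for every vertex $v\in V(G)$. A critical graph $G$ is double-critical if $\chi(G-x-y)\le\chi(G)-2$ for every edge $xy\in E(G)$. *)

From Stdlib Require Import ClassicalEpsilon.
From mathcomp Require Import all_boot.
Set Implicit Arguments. Unset Strict Implicit. Unset Printing Implicit Defensive.

Definition simple_graph (T : finType) (e : rel T) : Prop :=
  symmetric e /\ irreflexive e.

Definition proper_colouring (T : finType) (e : rel T) (S : {set T}) (k : nat)
  (f : T -> nat) : Prop :=
  (forall x, x \in S -> f x < k) /\
  (forall x y, x \in S -> y \in S -> e x y -> f x != f y).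

Definition colourable (T : finType) (e : rel T) (S : {set T}) (k : nat) : Prop :=
  exists f : T -> nat, proper_colouring e S k f.

(* chromatic number of the subgraph of (T,e) induced by S: the least k
   such that S is k-colourable (well defined for irreflexive e, since #|T| colours always suffice;
   we decide colourability classically and take ex_minn). *)
Definition colourableb (T : finType) (e : rel T) (S : {set T}) (k : nat) : bool :=
  if excluded_middle_informative (colourable e S k) then true else false.

Definition chi (T : finType) (e : rel T) (S : {set T}) : nat :=
  if excluded_middle_informative (exists k, colourableb e S k) is left P
  then ex_minn P else 0.

Definition critical (T : finType) (e : rel T) : Prop :=
  forall v : T, chi e (setT :\ v) < chi e setT.

Definition double_critical (T : finType) (e : rel T) : Prop :=
  critical e /\
  forall x y : T, e x y -> chi e (setT :\ x :\ y) <= chi e setT - 2.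

Definition complete_graph (T : finType) (e : rel T) : Prop :=
  forall x y : T, x != y -> e x y.

Definition contains_clique (T : finType) (e : rel T) (n : nat) : Prop :=
  exists S : {set T}, #|S| = n /\
    (forall x y, x \in S -> y \in S -> x != y -> e x y).

From Stdlib Require Import ClassicalEpsilon.
From mathcomp Require Import all_boot.
From mathcomp Require Import zify.

Set Implicit Arguments.
Unset Strict Implicit.
Unset Printing Implicit Defensive.

(* Let H be a (k-1)-clique and v a vertex outside it. Double-criticality
   applied to an edge vw with w outside H leaves H inside a graph of chromatic
   number k-2, so every neighbour of v lies in H. If v misses some h in H, then
   N(v) is contained in N(h), and a (k-1)-colouring of G - v extends to G by
   giving v the colour of h. Otherwise H + v is a k-clique, and deleting a
   vertex outside it (there is one, as G is not complete) keeps chi = k,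
   contradicting criticality. *)

Section Colouring.
Variables (T : finType) (e : rel T).

Definition clique (C : {set T}) : Prop :=
  forall x y, x \in C -> y \in C -> x != y -> e x y.

Lemma colourableP (S : {set T}) k : reflect (colourable e S k) (colourableb e S k).
Proof. by rewrite /colourableb; case: excluded_middle_informative => /= H; constructor. Qed.

Lemma colourable_le (S : {set T}) m n : m <= n -> colourable e S m -> colourable e S n.
Proof.
by move=> mn [f [f_lt f_proper]]; exists f; split=> // x xS; apply: leq_trans (f_lt x xS) mn.
Qed.

Hypothesis irr_e : irreflexive e.

Lemma colourable_card (S : {set T}) : colourable e S #|T|.
Proof.
exists (fun x => enum_rank x : nat); split=> [x _|x y _ _ exy]; first exact: ltn_ord.
apply: contraTneq exy => /val_inj/(congr1 enum_val); rewrite !enum_rankK => ->.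
by rewrite irr_e.
Qed.

Lemma chiP (S : {set T}) :
  colourable e S (chi e S) /\ forall m, colourable e S m -> chi e S <= m.
Proof.
rewrite /chi; case: excluded_middle_informative => [P|[]]; last first.
  by exists #|T|; apply/colourableP/colourable_card.
by case: ex_minnP => m /colourableP Sm minm; split=> // n /colourableP; apply: minm.
Qed.

Lemma chi_min (S : {set T}) m : colourable e S m -> chi e S <= m.
Proof. by case: (chiP S) => _; apply. Qed.

Lemma clique_le_chi (S C : {set T}) : C \subset S -> clique C -> #|C| <= chi e S.
Proof.
move=> /subsetP sCS clC; have [[f [f_lt f_proper]] _] := chiP S.
rewrite cardE -(size_map f) -(size_iota 0 (chi e S)); apply: uniq_leq_size.
  rewrite map_inj_in_uniq ?enum_uniq // => x y; rewrite !mem_enum => xC yC fxy.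
  apply/eqP; apply: contraT => xy.
  by have := f_proper x y (sCS x xC) (sCS y yC) (clC x y xC yC xy); rewrite fxy eqxx.
by move=> i /mapP[x]; rewrite mem_enum mem_iota => xC ->; rewrite f_lt ?sCS.
Qed.

Hypothesis sym_e : symmetric e.

Lemma colourable_extend_dominated v h m :
  h != v -> ~~ e v h -> (forall w, e v w -> e h w) ->
  colourable e (setT :\ v) m -> colourable e setT m.
Proof.
move=> hv nevh Nvh [f [f_lt f_proper]].
pose g x := if x == v then f h else f x.
have f_proper' x y : x != v -> y != v -> e x y -> f x != f y.
  by move=> xv yv; apply: f_proper; rewrite !inE ?xv ?yv.
exists g; split=> [x _|x y _ _ exy]; rewrite /g.
  by case: (eqVneq x v) => [_|xv]; apply: f_lt; rewrite !inE ?hv ?xv.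
case: (eqVneq x v) => [xv|xv]; case: (eqVneq y v) => [yv|yv] //.
- by move: exy; rewrite xv yv irr_e.
- by rewrite xv in exy; apply: f_proper' => //; apply: Nvh.
- by rewrite yv sym_e in exy; rewrite eq_sym; apply: f_proper' => //; apply: Nvh.
- exact: f_proper'.
Qed.

Lemma clique_setU1 v (C : {set T}) :
  (forall x, x \in C -> e v x) -> clique C -> clique (v |: C).
Proof.
move=> ev clC x y /setU1P[->|xC] /setU1P[->|yC] xy; rewrite ?eqxx // in xy.
- exact: ev.
- by rewrite sym_e; apply: ev.
- exact: clC.
Qed.

Lemma not_complete_outside_clique (C : {set T}) :
  ~ complete_graph e -> clique C -> exists u, u \notin C.
Proof.
move=> ncomp clC; case: (pickP [pred u | u \notin C]) => [u uC|allC]; first by exists u.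
by case: ncomp => x y; apply: clC; apply/negbFE/allC.
Qed.

End Colouring.

Section DoubleCritical.
Variables (T : finType) (e : rel T).
Hypotheses (irr_e : irreflexive e) (crit_e : critical e).

Lemma critical_clique_lt (C : {set T}) u :
  u \notin C -> clique e C -> #|C| < chi e setT.
Proof.
move=> uC clC; apply: leq_trans (crit_e u).
apply: clique_le_chi => //; apply/subsetP => x xC.
by rewrite !inE andbT; apply: contraNneq uC => <-.
Qed.

Lemma critical_chi_le1_complete : chi e setT <= 1 -> complete_graph e.
Proof.
move=> chi_le1 x y xy; suff: #|[set y]| < chi e setT by rewrite cards1 ltnNge chi_le1.
apply: (critical_clique_lt (u := x)); first by rewrite in_set1.
by move=> a b /set1P-> /set1P->; rewrite eqxx.
Qed.

Lemma double_critical_clique_le (C : {set T}) v w :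
  (forall x y, e x y -> chi e (setT :\ x :\ y) <= chi e setT - 2) ->
  e v w -> v \notin C -> w \notin C -> clique e C -> #|C| <= chi e setT - 2.
Proof.
move=> dc evw vC wC clC; apply: leq_trans (dc v w evw).
apply: clique_le_chi => //; apply/subsetP => x xC.
by rewrite !inE andbT; apply/andP; split; [apply: contraNneq wC | apply: contraNneq vC] => <-.
Qed.

End DoubleCritical.

Theorem proposition2 (T : finType) (e : rel T) (k : nat) :
  simple_graph e ->
  double_critical e ->
  chi e setT = k ->
  ~ complete_graph e ->
  ~ contains_clique e k.-1.
Proof.
move=> [sym_e irr_e] [crit dc] chik ncomp [H [cardH clH]].
have k_gt1 : 1 < k.
  by rewrite ltnNge -chik; apply/negP => /(critical_chi_le1_complete irr_e crit).
have [v vH] := not_complete_outside_clique ncomp clH.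
have NvH w : e v w -> w \in H.
  move=> evw; apply: contraT => wH.
  have := double_critical_clique_le irr_e dc evw vH wH clH; rewrite cardH chik; lia.
case: (pickP [pred h | (h \in H) && ~~ e v h]) => [h /andP[hH nevh] | vH_adj].
  have hv : h != v by apply: contraNneq vH => <-.
  have Nvh w : e v w -> e h w.
    move=> evw; apply: clH => //; first exact: NvH.
    by apply: contraNneq nevh => ->.
  have crit_v : colourable e (setT :\ v) k.-1.
    apply: colourable_le (chiP irr_e (setT :\ v)).1.
    by have := crit v; rewrite chik; lia.
  have := chi_min irr_e (colourable_extend_dominated irr_e sym_e hv nevh Nvh crit_v).
  by rewrite chik; lia.
have clvH : clique e (v |: H).
  by apply: clique_setU1 clH => // z zH; have := vH_adj z; rewrite /= zH => /negbFE.
have [u uvH] := not_complete_outside_clique ncomp clvH.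
have := critical_clique_lt irr_e crit uvH clvH; rewrite cardsU1 vH cardH chik; lia.
Qed.
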